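(* Let $G$ be a group, $U$ a nonlocal vertex algebra on which $G$ acts by automorphisms, and $V=\coprod_{g\in G}V[g]$ a nonlocal vertex $G$-graded algebra, and let $U\sharp_GV$ be their smash product. Suppose that $K$ is a nonlocal vertex algebra and $\psi:U\to K$, $\phi:V\to K$ are homomorphisms of nonlocal vertex algebras such that $Y(\phi(v),x_1)Y(\psi(u),x_2)=Y(\psi(gu),x_2)Y(\phi(v),x_1)$ for $u\in U$, $v\in V[g]$, $g\in G$. Then there exists a unique nonlocal vertex algebra homomorphism $f:U\sharp_GV\to K$ extending both $\psi$ and $\phi$, i.e. $f(u\otimes\mathbf{1})=\psi(u)$ and $f(\mathbf{1}\otimes v)=\phi(v)$.
   Context: A nonlocal vertex algebra is a complex vector space $V$ with vector $\mathbf{1}$ and linear $Y:V\to\mathrm{Hom}(V,V((x)))$, $Y(v,x)=\sum_nv_nx^{-n-1}$, with $Y(\mathbf{1},x)v=v$, $Y(v,x)\mathbf{1}\in V[[x]]$ with constant term $v$, and weak associativity $(x_0+x_2)^lY(u,x_0+x_2)Y(v,x_2)w=(x_0+x_2)^lY(Y(u,x_0)v,x_2)w$ for some $l\ge0$; homomorphisms preserve $\mathbf{1}$ and $Y$. A nonlocal vertex $G$-graded algebra ($e$ the identity of $G$) is a nonlocal vertex algebra $V=\coprod_gV[g]$ with $\mathbf{1}\in V[e]$ and $Y(u,x)v\in V[gh]((x))$ for $u\in V[g]$, $v\in V[h]$. The smash product $U\sharp_GV$ is $U\otimes V$ with vacuum $\mathbf{1}\otimes\mathbf{1}$ and vertex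 operators $Y_\sharp(u\otimes v,x)(u'\otimes v')=Y(u,x)g(u')\otimes Y(v,x)v'$ for $u,u'\in U$, $v\in V[g]$, $v'\in V$; it is a nonlocal vertex algebra containing $U\cong U\otimes\mathbf{1}$ and $V\cong\mathbf{1}\otimes V$ as subalgebras. *)

From HB Require Import structures.
From mathcomp Require Import all_boot all_order all_algebra.
From mathcomp Require Import complex Rstruct.
Set Implicit Arguments. Unset Strict Implicit. Unset Printing Implicit Defensive.
Import Order.TTheory GRing.Theory Num.Theory.
Local Open Scope ring_scope.

Definition Cx : fieldType := Rdefinitions.R[i].

Definition binC (k : int) (i : nat) : Cx :=
  (\prod_(j < i) (k%:~R - j%:R)) / (i`!)%:R.

Definition has_zsum (T : zmodType) (F : int -> T) (s : T) : Prop :=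
  exists N : nat, (forall j : int, (N%:Z <= `|j|)%R -> F j = 0) /\
    s = \sum_(i < (2 * N).+1) F (i%:Z - N%:Z).

Definition has_nsum (T : zmodType) (F : nat -> T) (s : T) : Prop :=
  exists N : nat, (forall i : nat, (N <= i)%N -> F i = 0) /\
    s = \sum_(i < N) F i.

(* A "vertex operator map" on V is encoded by its modes:
   Y u v n = u_n v, so that Y(u,x)v = \sum_n (Y u v n) x^{-n-1}. *)
Definition modes (V : lmodType Cx) := V -> V -> int -> V.

(* Y : V -> Hom(V, V((x))) linear, values are lower-truncated Laurent series. *)
Definition vo_linear (V : lmodType Cx) (Y : modes V) : Prop :=
  (forall (a : Cx) (u1 u2 v : V) (n : int),
      Y (a *: u1 + u2) v n = a *: Y u1 v n + Y u2 v n) /\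
  (forall (a : Cx) (u v1 v2 : V) (n : int),
      Y u (a *: v1 + v2) n = a *: Y u v1 n + Y u v2 n).

Definition vo_truncated (V : lmodType Cx) (Y : modes V) : Prop :=
  forall u v : V, exists N : int, forall n : int, N <= n -> Y u v n = 0.

(* Coefficient of x0^a x2^b in (x0+x2)^l Y(u,x0+x2) Y(v,x2) w
   (binomial expansion in nonnegative powers of x2) is the (finite) sum
   \sum_{i>=0} binom(i+a, i) u_{l-1-i-a} v_{i-b-1} w. *)
Definition wa_lhs_term (V : lmodType Cx) (Y : modes V) (l : nat) (u v w : V)
  (a b : int) (i : nat) : V :=
  binC (i%:Z + a) i *: Y u (Y v w (i%:Z - b - 1)) (l%:Z - 1 - i%:Z - a).

(* Coefficient of x0^a x2^b in (x0+x2)^l Y(Y(u,x0)v,x2) w. *)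
Definition wa_rhs (V : lmodType Cx) (Y : modes V) (l : nat) (u v w : V)
  (a b : int) : V :=
  \sum_(t < l.+1) ('C(l, t))%:R *: Y (Y u v (l%:Z - t%:Z - a - 1)) w (t%:Z - b - 1).

Definition weak_assoc (V : lmodType Cx) (Y : modes V) : Prop :=
  forall u v w : V, exists l : nat, forall a b : int,
    has_nsum (wa_lhs_term Y l u v w a b) (wa_rhs Y l u v w a b).

Definition is_nva (V : lmodType Cx) (vac : V) (Y : modes V) : Prop :=
  [/\ vo_linear Y, vo_truncated Y,
      (forall (v : V) (n : int), Y vac v n = if n == -1 then v else 0),
      (* Y(v,x)1 in V[[x]] with constant term v *)
      (forall (v : V) (n : int), 0 <= n -> Y v vac n = 0) /\
      (forall v : V, Y v vac (-1) = v)
    & weak_assoc Y].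

Definition is_linear_map (V W : lmodType Cx) (f : V -> W) : Prop :=
  forall (a : Cx) (u v : V), f (a *: u + v) = a *: f u + f v.

Definition is_nva_hom (V : lmodType Cx) (vacV : V) (YV : modes V)
  (W : lmodType Cx) (vacW : W) (YW : modes W) (f : V -> W) : Prop :=
  [/\ is_linear_map f, f vacV = vacW &
      forall (u v : V) (n : int), f (YV u v n) = YW (f u) (f v) n].

Definition is_group (G : Type) (mul : G -> G -> G) (e : G) (inv : G -> G) : Prop :=
  [/\ forall x y z, mul x (mul y z) = mul (mul x y) z,
      forall x, mul e x = x, forall x, mul x e = x,
      forall x, mul (inv x) x = e & forall x, mul x (inv x) = e].

Definition is_aut_action (G : Type) (mul : G -> G -> G) (e : G)
  (U : lmodType Cx) (vacU : U) (YU : modes U) (act : G -> U -> U) : Prop :=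
  [/\ forall g, is_nva_hom vacU YU vacU YU (act g),
      forall g, bijective (act g),
      forall u, act e u = u &
      forall g h u, act (mul g h) u = act g (act h u)].

Definition is_subspace (V : lmodType Cx) (P : V -> Prop) : Prop :=
  P 0 /\ forall (a : Cx) (u v : V), P u -> P v -> P (a *: u + v).

Definition is_direct_sum_decomp (G : Type) (V : lmodType Cx) (Vg : G -> V -> Prop)
  : Prop :=
  [/\ forall g, is_subspace (Vg g),
      (forall v : V, exists s : seq (G * V),
          List.Forall (fun p => Vg p.1 p.2) s /\ v = \sum_(p <- s) p.2) &
      (forall s : seq (G * V), List.NoDup (map fst s) ->
          List.Forall (fun p => Vg p.1 p.2) s -> \sum_(p <- s) p.2 = 0 ->
          List.Forall (fun p => p.2 = 0) s)].

Definition is_graded_nva (G : Type) (mul : G -> G -> G) (e : G)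
  (V : lmodType Cx) (vacV : V) (YV : modes V) (Vg : G -> V -> Prop) : Prop :=
  [/\ is_nva vacV YV, is_direct_sum_decomp Vg, Vg e vacV &
      forall (g h : G) (u v : V) (n : int), Vg g u -> Vg h v -> Vg (mul g h) (YV u v n)].

Definition is_bilinear (U V W : lmodType Cx) (b : U -> V -> W) : Prop :=
  (forall (a : Cx) u1 u2 v, b (a *: u1 + u2) v = a *: b u1 v + b u2 v) /\
  (forall (a : Cx) u v1 v2, b u (a *: v1 + v2) = a *: b u v1 + b u v2).

Definition is_tensor_product (U V T : lmodType Cx) (tens : U -> V -> T) : Prop :=
  is_bilinear tens /\
  forall (W : lmodType Cx) (b : U -> V -> W), is_bilinear b ->
    (exists h : T -> W, is_linear_map h /\ forall u v, h (tens u v) = b u v) /\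
    (forall h1 h2 : T -> W, is_linear_map h1 -> is_linear_map h2 ->
       (forall u v, h1 (tens u v) = b u v) -> (forall u v, h2 (tens u v) = b u v) ->
       forall t, h1 t = h2 t).

(* Vertex operators of the smash product U #_G V on T = U (x) V:
   Y#(u(x)v, x)(u'(x)v') = Y(u,x) g(u') (x) Y(v,x) v'  for v in V[g],
   i.e. (u(x)v)_n (u'(x)v') = \sum_{j+k = n-1} u_j (g u') (x) v_k v'. *)
Definition is_smash_vo (G : Type) (U V : lmodType Cx) (YU : modes U) (YV : modes V)
  (act : G -> U -> U) (Vg : G -> V -> Prop) (T : lmodType Cx) (tens : U -> V -> T)
  (Ysh : modes T) : Prop :=
  vo_linear Ysh /\
  forall (g : G) (u u' : U) (v v' : V) (n : int), Vg g v ->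
    has_zsum (fun j : int => tens (YU u (act g u') j) (YV v v' (n - 1 - j)))
             (Ysh (tens u v) (tens u' v') n).

From HB Require Import structures.
From mathcomp Require Import all_boot all_order all_algebra.
From mathcomp Require Import zify ring complex Rstruct.
Import Order.TTheory GRing.Theory Num.Theory.
Set Implicit Arguments. Unset Strict Implicit. Unset Printing Implicit Defensive.
Local Open Scope ring_scope.

(* The lift is forced: in the smash product u (x) v = (u (x) 1)_{-1} (1 (x) v), so
   necessarily f (u (x) v) = psi(u)_{-1} phi(v), and this formula is bilinear.  To see
   that it respects vertex operators one may take v in V[g] and v' in V[h].  The
   commutation hypothesis moves phi(v) past psi(u'), turning
   (psi(u)_{-1} phi(v))_n (psi(u')_{-1} phi(v')) into
   \sum_j psi(u_j (g u'))_{-1} phi(v_{n-1-j} v'), which is f applied to the defining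
   sum of the smash-product vertex operator.  The expansion of (a_{-1} b)_n c as the finite
   sum \sum_j a_j b_{n-1-j} c used here follows from weak associativity, because a_m b_k c
   vanishes for large m uniformly in k. *)

Section LinearMaps.
Variables (V W : lmodType Cx) (f : V -> W).
Hypothesis f_lin : is_linear_map f.

Lemma linear_map0 : f 0 = 0.
Proof.
have := f_lin 1 0 0; rewrite !scale1r addr0 => f00.
by apply: (addrI (f 0)); rewrite addr0 -f00.
Qed.

Lemma linear_mapD x y : f (x + y) = f x + f y.
Proof. by have := f_lin 1 x y; rewrite !scale1r. Qed.

Lemma linear_map_sum n (F : 'I_n -> V) : f (\sum_(i < n) F i) = \sum_(i < n) f (F i).
Proof.
elim: n F => [|n IH] F; first by rewrite !big_ord0 linear_map0.
by rewrite !big_ord_recr /= linear_mapD IH.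
Qed.

End LinearMaps.

Section Bilinear.
Variables (U V W : lmodType Cx) (b : U -> V -> W).
Hypothesis b_bilin : is_bilinear b.

Lemma bilinear_linl v : is_linear_map (b^~ v).
Proof. by move=> a x y; apply: b_bilin.1. Qed.

Lemma bilinear_linr u : is_linear_map (b u).
Proof. by move=> a x y; apply: b_bilin.2. Qed.

Lemma bilinear0l v : b 0 v = 0.
Proof. exact: linear_map0 (bilinear_linl v). Qed.

Lemma bilinear0r u : b u 0 = 0.
Proof. exact: linear_map0 (bilinear_linr u). Qed.

Lemma bilinearDl x y v : b (x + y) v = b x v + b y v.
Proof. exact: (linear_mapD (bilinear_linl v) x y). Qed.

Lemma bilinearDr u x y : b u (x + y) = b u x + b u y.
Proof. exact: (linear_mapD (bilinear_linr u) x y). Qed.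

Lemma linear_map_bilinear (X : lmodType Cx) (h : W -> X) :
  is_linear_map h -> is_bilinear (fun u v => h (b u v)).
Proof. by move=> h_lin; split=> a x y z; rewrite ?b_bilin.1 ?b_bilin.2 h_lin. Qed.

End Bilinear.

Lemma vo_linear_bilinear (V : lmodType Cx) (Y : modes V) :
  vo_linear Y -> forall n, is_bilinear (fun u v => Y u v n).
Proof. by case=> Yl Yr n; split=> a x y z; [apply: Yl | apply: Yr]. Qed.

Section VertexOperatorLinearity.
Variables (V : lmodType Cx) (Y : modes V).
Hypothesis Y_lin : vo_linear Y.

Lemma vo0l v n : Y 0 v n = 0.
Proof. exact: bilinear0l (vo_linear_bilinear Y_lin n) v. Qed.

Lemma vo0r u n : Y u 0 n = 0.
Proof. exact: bilinear0r (vo_linear_bilinear Y_lin n) u. Qed.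

Lemma voDl x y v n : Y (x + y) v n = Y x v n + Y y v n.
Proof. exact: (bilinearDl (vo_linear_bilinear Y_lin n) x y v). Qed.

Lemma voDr u x y n : Y u (x + y) n = Y u x n + Y u y n.
Proof. exact: (bilinearDr (vo_linear_bilinear Y_lin n) u x y). Qed.

End VertexOperatorLinearity.

Section TensorProduct.
Variables (U V T : lmodType Cx) (tens : U -> V -> T).
Hypothesis tens_univ : is_tensor_product tens.

Lemma tensor_linear_ext (W : lmodType Cx) (h1 h2 : T -> W) :
  is_linear_map h1 -> is_linear_map h2 ->
  (forall u v, h1 (tens u v) = h2 (tens u v)) -> forall t, h1 t = h2 t.
Proof.
move=> h1_lin h2_lin eq12.
have b_bilin := linear_map_bilinear tens_univ.1 h2_lin.
exact: (tens_univ.2 W _ b_bilin).2 h1 h2 h1_lin h2_lin eq12 (fun _ _ => erefl).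
Qed.

Lemma tensor_bilinear_ext (W : lmodType Cx) (B1 B2 : T -> T -> W) :
  (forall t, is_linear_map (B1 t)) -> (forall t', is_linear_map (B1^~ t')) ->
  (forall t, is_linear_map (B2 t)) -> (forall t', is_linear_map (B2^~ t')) ->
  (forall u v u' v', B1 (tens u v) (tens u' v') = B2 (tens u v) (tens u' v')) ->
  forall t t', B1 t t' = B2 t t'.
Proof.
move=> B1r B1l B2r B2l eq12 t t'.
apply: (tensor_linear_ext (B1l t') (B2l t')) => u v {t}.
exact: tensor_linear_ext (B1r _) (B2r _) (eq12 u v) t'.
Qed.

End TensorProduct.

Lemma graded_ind (G : Type) (V : lmodType Cx) (Vg : G -> V -> Prop) (P : V -> Prop) :
  is_direct_sum_decomp Vg -> P 0 -> (forall x y, P x -> P y -> P (x + y)) ->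
  (forall g v, Vg g v -> P v) -> forall v, P v.
Proof.
case=> _ decomp _ P0 PD Phom v; have [s [s_hom ->]] := decomp v.
elim: s s_hom => [|[g w] s IH] s_hom; first by rewrite big_nil.
case/List.Forall_cons_iff: s_hom => w_g s_hom.
by rewrite big_cons; apply: PD; [apply: (Phom g) | apply: IH].
Qed.

Definition window_sum (T : zmodType) (lo : int) (len : nat) (F : int -> T) : T :=
  \sum_(k < len) F (lo + k%:Z).

Section WindowSums.
Variables (T : zmodType) (F : int -> T).

Definition supported_in (lo : int) (len : nat) : Prop :=
  forall j, j < lo \/ lo + len%:Z <= j -> F j = 0.

Lemma window_sum_widen (lo : int) (len : nat) (lo' : int) (len' : nat) :
  lo' <= lo -> lo + len%:Z <= lo' + len'%:Z -> supported_in lo len ->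
  window_sum lo' len' F = window_sum lo len F.
Proof.
move=> le_lo le_hi F_supp.
pose d := absz (lo - lo'); have lo_d : lo = lo' + d%:Z by rewrite /d; lia.
pose r := absz (lo' + len'%:Z - (lo + len%:Z))%R.
have len'E : len' = (d + len + r)%N by rewrite /r /d; lia.
rewrite /window_sum len'E !big_split_ord /=.
rewrite [X in X + _ + _]big1 ?add0r; last by move=> [i /= ?] _; apply: F_supp; lia.
rewrite [X in _ + X]big1 ?addr0; last by move=> [i /= ?] _; apply: F_supp; lia.
by apply: eq_bigr => i _; congr F; lia.
Qed.

Lemma window_sum_eq (lo : int) (len : nat) (lo' : int) (len' : nat) :
  supported_in lo len -> supported_in lo' len' ->
  window_sum lo len F = window_sum lo' len' F.
Proof.
move=> F_supp F_supp'.
pose L := Num.min lo lo'; pose n := absz (Num.max (lo + len%:Z) (lo' + len'%:Z) - L)%R.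
by rewrite -(@window_sum_widen lo len L n) -?(@window_sum_widen lo' len' L n) //;
  rewrite /L /n; lia.
Qed.

Lemma has_zsum_window (lo : int) (len : nat) :
  supported_in lo len -> has_zsum F (window_sum lo len F).
Proof.
move=> F_supp; pose N := (absz lo + absz (lo + len%:Z)%R).+1.
exists N; split; first by move=> j Nj; apply: F_supp; rewrite /N; lia.
rewrite (@window_sum_eq lo len (- N%:Z) (2 * N).+1) // => j j_out.
by apply: F_supp; rewrite /N; lia.
Qed.

Lemma has_zsum_windowP s : has_zsum F s ->
  exists lo len, supported_in lo len /\ s = window_sum lo len F.
Proof.
move=> [N [F_supp ->]]; exists (- N%:Z), (2 * N).+1; split.
  by move=> j j_out; apply: F_supp; lia.
by apply: eq_bigr => i _; congr F; lia.
Qed.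

Lemma has_zsum_unique s s' : has_zsum F s -> has_zsum F s' -> s = s'.
Proof.
move=> /has_zsum_windowP [lo [len [F_supp ->]]].
by move=> /has_zsum_windowP [lo' [len' [F_supp' ->]]]; apply: window_sum_eq.
Qed.

Lemma has_zsum_of_nsum_rev (k : int) s : (forall j, k <= j -> F j = 0) ->
  has_nsum (fun i : nat => F (k - 1 - i%:Z)) s -> has_zsum F s.
Proof.
move=> F_hi [N [F_lo ->]].
have -> : \sum_(i < N) F (k - 1 - i%:Z) = window_sum (k - N%:Z) N F.
  rewrite /window_sum (reindex_inj rev_ord_inj) /=.
  by apply: eq_bigr => i _; congr F; have := ltn_ord i; lia.
apply: has_zsum_window => j [j_lo | j_hi]; last by apply: F_hi; lia.
by have := F_lo (absz (k - 1 - j)%R) ltac:(lia); congr (F _ = 0); lia.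
Qed.

End WindowSums.

Lemma has_zsum_linear_map (V W : lmodType Cx) (f : V -> W) (F : int -> V) s :
  is_linear_map f -> has_zsum F s -> has_zsum (fun j => f (F j)) (f s).
Proof.
move=> f_lin [N [F_supp ->]]; exists N; split; last exact: linear_map_sum.
by move=> j Nj; rewrite F_supp ?linear_map0.
Qed.

Lemma eq_has_zsum (T : zmodType) (F F' : int -> T) s :
  F =1 F' -> has_zsum F s -> has_zsum F' s.
Proof.
move=> eqF [N [F_supp ->]]; exists N; split; last exact: eq_bigr.
by move=> j Nj; rewrite -eqF F_supp.
Qed.

Lemma eq_has_nsum (T : zmodType) (F F' : nat -> T) s :
  F =1 F' -> has_nsum F s -> has_nsum F' s.
Proof.
move=> eqF [N [F_supp ->]]; exists N; split; last exact: eq_bigr.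
by move=> i Ni; rewrite -eqF F_supp.
Qed.

Lemma has_nsum0 (T : zmodType) (F : nat -> T) s :
  has_nsum F s -> (forall i, F i = 0) -> s = 0.
Proof. by move=> [N [_ ->]] F0; apply: big1. Qed.

Lemma nsum_trunc (T : zmodType) (F : nat -> T) (N0 N : nat) :
  (forall i, (N0 <= i)%N -> F i = 0) -> (N0 <= N)%N ->
  \sum_(i < N) F i = \sum_(i < N0) F i.
Proof.
move=> F_supp le_N; rewrite -(subnKC le_N) big_split_ord /= [X in _ + X]big1 ?addr0 //.
by move=> i _; apply: F_supp; rewrite leq_addr.
Qed.

Definition falling_fact (k : int) (i : nat) : Cx := \prod_(j < i) (k%:~R - j%:R).

Lemma falling_factSl k i : falling_fact k i.+1 = k%:~R * falling_fact (k - 1) i.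
Proof.
rewrite /falling_fact big_ord_recl /= subr0; congr (_ * _); apply: eq_bigr => j _.
rewrite /bump /= rmorphB /= natrD; ring.
Qed.

Lemma falling_factSr k i : falling_fact k i.+1 = falling_fact k i * (k%:~R - i%:R).
Proof. by rewrite /falling_fact big_ord_recr. Qed.

Lemma natCS_neq0 (n : nat) : (n.+1%:R : Cx) != 0.
Proof. by have: (n.+1%:R : Rdefinitions.R[i]) != 0 by rewrite pnatr_eq0. Qed.

Lemma factC_neq0 (n : nat) : ((n`!)%:R : Cx) != 0.
Proof. by have := fact_gt0 n; case: (n`!) => // m _; exact: natCS_neq0. Qed.

Lemma binC0 k : binC k 0 = 1.
Proof. by rewrite /binC big_ord0 fact0 divr1. Qed.

Lemma binCS k i : binC k i.+1 = binC (k - 1) i.+1 + binC (k - 1) i.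
Proof.
rewrite /binC -/(falling_fact k i.+1) -/(falling_fact (k - 1) i.+1).
rewrite -/(falling_fact (k - 1) i) falling_factSl falling_factSr factS natrM rmorphB /=.
have Si_neq0 := natCS_neq0 i; have fi_neq0 := factC_neq0 i.
by field; rewrite fi_neq0 addrC natr1 Si_neq0.
Qed.

Lemma binCnn (i : nat) : binC i%:Z i = 1.
Proof.
rewrite /binC -/(falling_fact i%:Z i).
suff -> : falling_fact i%:Z i = (i`!)%:R by rewrite divff // factC_neq0.
elim: i => [|i IH]; first by rewrite /falling_fact big_ord0.
by rewrite falling_factSl factS natrM (_ : i.+1%:Z - 1 = i%:Z) ?IH //; lia.
Qed.

Lemma binC_small (k i : nat) : (k < i)%N -> binC k%:Z i = 0.
Proof. by move=> lt_ki; rewrite /binC (bigD1 (Ordinal lt_ki)) //= subrr !mul0r. Qed.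

Definition weak_assoc_at (V : lmodType Cx) (Y : modes V) (l : nat) (u v w : V) : Prop :=
  forall a b, has_nsum (wa_lhs_term Y l u v w a b) (wa_rhs Y l u v w a b).

Section WeakAssociativity.
Variables (V : lmodType Cx) (Y : modes V) (u v w : V).

Lemma wa_rhsS l a b :
  wa_rhs Y l.+1 u v w a b = wa_rhs Y l u v w (a - 1) b + wa_rhs Y l u v w a (b - 1).
Proof.
pose X (t : nat) := Y (Y u v (l%:Z - t%:Z - a)) w (t%:Z - b - 1).
have -> : wa_rhs Y l.+1 u v w a b = \sum_(t < l.+2) ('C(l.+1, t))%:R *: X t.
  by apply: eq_bigr => t _; rewrite /X; congr (_ *: Y (Y u v _) w _); lia.
have -> : wa_rhs Y l u v w (a - 1) b = \sum_(t < l.+2) ('C(l, t))%:R *: X t.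
  rewrite big_ord_recr /= bin_small // scale0r addr0.
  by apply: eq_bigr => t _; rewrite /X; congr (_ *: Y (Y u v _) w _); lia.
have -> : wa_rhs Y l u v w a (b - 1) = \sum_(t < l.+1) ('C(l, t))%:R *: X t.+1.
  by apply: eq_bigr => t _; rewrite /X; congr (_ *: Y (Y u v _) w _); lia.
rewrite big_ord_recl [in RHS]big_ord_recl !bin0 -addrA; congr (_ + _).
by rewrite -big_split; apply: eq_bigr => t _; rewrite !lift0 binS natrD scalerDl.
Qed.

Lemma weak_assoc_atS l : weak_assoc_at Y l u v w -> weak_assoc_at Y l.+1 u v w.
Proof.
move=> wa a b; have [N1 [z1 e1]] := wa (a - 1) b; have [N2 [z2 e2]] := wa a (b - 1).
have term0 : wa_lhs_term Y l.+1 u v w a b 0 = wa_lhs_term Y l u v w (a - 1) b 0.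
  by rewrite /wa_lhs_term !binC0; congr (_ *: Y u (Y v w _) _); lia.
(* Pascal's rule for binC matches the recursion of wa_rhsS term by term. *)
have termS i : wa_lhs_term Y l.+1 u v w a b i.+1 =
    wa_lhs_term Y l u v w (a - 1) b i.+1 + wa_lhs_term Y l u v w a (b - 1) i.
  rewrite /wa_lhs_term binCS scalerDl.
  by congr (binC _ _ *: Y u (Y v w _) _ + binC _ _ *: Y u (Y v w _) _); lia.
pose N := maxn N1 N2.
exists N.+1; split.
  by case=> [|i] lt_i; [lia | rewrite termS z1 ?z2 ?addr0 //; lia].
rewrite big_ord_recl term0; under eq_bigr => i _ do rewrite lift0 termS.
rewrite big_split /= addrA wa_rhsS e1 e2; congr (_ + _).
  rewrite -(@nsum_trunc _ _ N1 N.+1) //; last by lia.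
  by rewrite big_ord_recl; congr (_ + _); apply: eq_bigr => i _; rewrite lift0.
by rewrite (@nsum_trunc _ _ N2 N) //; lia.
Qed.

Lemma weak_assoc_at_leq l l' : (l <= l')%N ->
  weak_assoc_at Y l u v w -> weak_assoc_at Y l' u v w.
Proof.
move=> /subnKC <-; elim: (l' - l)%N => [|d IH] wa; first by rewrite addn0.
by rewrite addnS; apply: weak_assoc_atS; apply: IH.
Qed.

Lemma wa_rhs_top l a b :
  (forall t : nat, (t < l)%N -> Y (Y u v (l%:Z - t%:Z - a - 1)) w (t%:Z - b - 1) = 0) ->
  wa_rhs Y l u v w a b = Y (Y u v (- a - 1)) w (l%:Z - b - 1).
Proof.
move=> low; rewrite /wa_rhs big_ord_recr /= big1 ?add0r => [|t _].
  by rewrite binn scale1r; congr (Y (Y u v _) w _); lia.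
by rewrite low ?scaler0.
Qed.

End WeakAssociativity.

Section IterateMinusOne.
Variables (K : lmodType Cx) (Y : modes K).
Hypotheses (Y_lin : vo_linear Y) (Y_trunc : vo_truncated Y).
Variables (a b c : K) (M : int) (l : nat).
Hypothesis a_trunc : forall m k, M <= m -> Y a (Y b c k) m = 0.
Hypotheses (Ml : M <= l%:Z) (wa_l : weak_assoc_at Y l a b c).

(* Descending induction on m, using the coefficient of x0^(-m-1) x2^(l-p-1) of weak
   associativity: its left side vanishes since binC (i-m-1) i = 0 for i > m and the modes
   of a are >= M for i <= m. *)
Lemma iterate_nonneg_mode0 (m : nat) p : Y (Y a b m%:Z) c p = 0.
Proof.
have [M0 M0_trunc] := Y_trunc a b.
elim: (absz M0 - m)%N {-2}m (leqnn (absz M0 - m)) p => [|D IH] {}m le_mD p.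
  by rewrite M0_trunc ?vo0l //; lia.
have -> : Y (Y a b m%:Z) c p = wa_rhs Y l a b c (- m%:Z - 1) (l%:Z - p - 1).
  rewrite wa_rhs_top => [|t lt_tl]; first by congr (Y (Y a b _) c _); lia.
  have -> : l%:Z - t%:Z - (- m%:Z - 1) - 1 = (m + (l - t))%N%:Z by lia.
  by rewrite IH //; lia.
apply: (has_nsum0 (wa_l _ _)) => i; rewrite /wa_lhs_term.
have [lt_mi | le_im] := ltnP m i; last by rewrite a_trunc ?scaler0 //; lia.
by rewrite (_ : _ + _ = (i - m.+1)%N%:Z) ?binC_small ?scale0r //; lia.
Qed.

Lemma iterate_minus1_nsum n :
  has_nsum (fun i : nat => Y a (Y b c (n - 1 - (l%:Z - 1 - i%:Z))) (l%:Z - 1 - i%:Z))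
           (Y (Y a b (-1)) c n).
Proof.
have := wa_l 0 (l%:Z - n - 1); rewrite wa_rhs_top => [|t lt_tl].
  rewrite (_ : l%:Z - (l%:Z - n - 1) - 1 = n) ?subr0; last by lia.
  apply: eq_has_nsum => i; rewrite /wa_lhs_term addr0 binCnn scale1r subr0.
  by congr (Y a (Y b c _) _); lia.
by rewrite (_ : _ - _ - 0 - 1 = (l - t.+1)%N%:Z) ?iterate_nonneg_mode0 //; lia.
Qed.

End IterateMinusOne.

Lemma nva_iterate_minus1 (K : lmodType Cx) (vac : K) (Y : modes K) :
  is_nva vac Y -> forall (a b c : K) (M : int),
  (forall m k, M <= m -> Y a (Y b c k) m = 0) ->
  forall n, has_zsum (fun j => Y a (Y b c (n - 1 - j)) j) (Y (Y a b (-1)) c n).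
Proof.
case=> Y_lin Y_trunc _ _ Y_wa a b c M a_trunc n.
have [l0 wa0] := Y_wa a b c; pose l := (absz M + l0)%N.
have wa_l : weak_assoc_at Y l a b c by apply: weak_assoc_at_leq wa0; apply: leq_addl.
have Ml : M <= l%:Z by rewrite /l; lia.
apply: (@has_zsum_of_nsum_rev _ _ l%:Z) => [j le_lj|]; first by apply: a_trunc; lia.
exact: iterate_minus1_nsum Y_lin Y_trunc _ _ _ _ _ a_trunc Ml wa_l n.
Qed.

Section SmashProductUniversality.
Variables (G : Type) (mulG : G -> G -> G) (e : G) (invG : G -> G).
Hypothesis HG : is_group mulG e invG.
Variables (U : lmodType Cx) (vacU : U) (YU : modes U).
Hypothesis HU : is_nva vacU YU.
Variable act : G -> U -> U.
Hypothesis Hact : is_aut_action mulG e vacU YU act.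
Variables (V : lmodType Cx) (vacV : V) (YV : modes V) (Vg : G -> V -> Prop).
Hypothesis HV : is_graded_nva mulG e vacV YV Vg.
Variables (T : lmodType Cx) (tens : U -> V -> T).
Hypothesis HT : is_tensor_product tens.
Variable Ysh : modes T.
Hypothesis HYsh : is_smash_vo YU YV act Vg tens Ysh.
Variables (K : lmodType Cx) (vacK : K) (YK : modes K).
Hypothesis HK : is_nva vacK YK.
Variables (psi : U -> K) (phi : V -> K).
Hypotheses (Hpsi : is_nva_hom vacU YU vacK YK psi) (Hphi : is_nva_hom vacV YV vacK YK phi).
Hypothesis Hcomm : forall (g : G) (u : U) (v : V), Vg g v ->
  forall (w : K) (m n : int),
    YK (phi v) (YK (psi u) w n) m = YK (psi (act g u)) (YK (phi v) w m) n.

Let K_lin : vo_linear YK. Proof. by case: HK. Qed.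
Let K_vacl w n : YK vacK w n = if n == -1 then w else 0. Proof. by case: HK. Qed.
Let K_vacr w : YK w vacK (-1) = w. Proof. by case: HK => _ _ _ []. Qed.
Let psi_modes x y n : psi (YU x y n) = YK (psi x) (psi y) n. Proof. by case: Hpsi. Qed.
Let phi_modes x y n : phi (YV x y n) = YK (phi x) (phi y) n. Proof. by case: Hphi. Qed.
Let tens_bilin : is_bilinear tens. Proof. exact: HT.1. Qed.
Let Ysh_lin : vo_linear Ysh. Proof. exact: HYsh.1. Qed.

Let act_modes g x y n : act g (YU x y n) = YU (act g x) (act g y) n.
Proof. by case: Hact => act_hom _ _ _; case: (act_hom g). Qed.

Let act_invK h x : act h (act (invG h) x) = x.
Proof.
by case: HG => _ _ _ _ mulV; case: Hact => _ _ act1 actM; rewrite -actM mulV act1.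
Qed.

Let Vg_modes g h x y n : Vg g x -> Vg h y -> Vg (mulG g h) (YV x y n).
Proof. by case: HV => _ _ _; apply. Qed.

(* Only the term j = -1 of the smash-product sum survives. *)
Lemma smash_unit_mode u v : Ysh (tens u vacV) (tens vacU v) (-1) = tens u v.
Proof.
case: HU => _ _ _ [_ U_vacr] _; case: Hact => _ _ act1 _.
case: HV => [[_ _ V_vacl _ _] _ V_e _].
pose F j := tens (YU u (act e vacU) j) (YV vacV v (-1 - 1 - j)).
apply: (has_zsum_unique (F := F)); first exact: HYsh.2 _ _ _ _ _ _ V_e.
have -> : tens u v = window_sum (-1) 1 F.
  by rewrite /window_sum big_ord1 /F act1 U_vacr V_vacl.
apply: has_zsum_window => j j_out; rewrite /F V_vacl ifN ?(bilinear0r tens_bilin) //.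
by apply/eqP; lia.
Qed.

Definition smash_pair (u : U) (v : V) : K := YK (psi u) (phi v) (-1).

Lemma smash_pair_bilinear : is_bilinear smash_pair.
Proof.
case: Hpsi => psi_lin _ _; case: Hphi => phi_lin _ _.
by split=> a x y z; rewrite /smash_pair ?psi_lin ?phi_lin (K_lin.1, K_lin.2).
Qed.

Lemma smash_pair_unitr u : smash_pair u vacV = psi u.
Proof. by case: Hphi => _ phi_vac _; rewrite /smash_pair phi_vac K_vacr. Qed.

Lemma smash_pair_unitl v : smash_pair vacU v = phi v.
Proof. by case: Hpsi => _ psi_vac _; rewrite /smash_pair psi_vac K_vacl. Qed.

Lemma psi_phi_commV h x z w m k : Vg h z ->
  YK (psi x) (YK (phi z) w k) m = YK (phi z) (YK (psi (act (invG h) x)) w m) k.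
Proof. by move=> z_h; rewrite (Hcomm (act (invG h) x) z_h) act_invK. Qed.

(* Move phi z = (phi z)_{-1} 1 to the front with psi_phi_commV, act there, and move back. *)
Lemma psi_mode_smash_pair h x y z j : Vg h z ->
  YK (psi x) (smash_pair y z) j = smash_pair (YU x y j) z.
Proof.
move=> z_h; rewrite /smash_pair.
transitivity (YK (phi z) (YK (psi (act (invG h) x)) (psi (act (invG h) y)) j) (-1)).
  by rewrite -{1}(K_vacr (phi z)) !(psi_phi_commV _ _ _ _ z_h) K_vacr.
by rewrite -psi_modes -act_modes -{2}(K_vacr (phi z)) (psi_phi_commV _ _ _ _ z_h) K_vacr.
Qed.

Lemma phi_mode_smash_pair g v u' v' k : Vg g v ->
  YK (phi v) (smash_pair u' v') k = smash_pair (act g u') (YV v v' k).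
Proof. by move=> v_g; rewrite /smash_pair (Hcomm _ v_g) phi_modes. Qed.

Variable f : T -> K.
Hypotheses (f_lin : is_linear_map f) (f_tens : forall u v, f (tens u v) = smash_pair u v).

(* Both sides are sums over j of smash_pair (u_j (g u')) (v_{n-1-j} v'): the left one by
   the definition of the smash product, the right one by nva_iterate_minus1. *)
Lemma lift_modes_homogeneous g h u v u' v' n : Vg g v -> Vg h v' ->
  f (Ysh (tens u v) (tens u' v') n) = YK (f (tens u v)) (f (tens u' v')) n.
Proof.
move=> v_g v'_h; rewrite !f_tens.
pose F j := smash_pair (YU u (act g u') j) (YV v v' (n - 1 - j)).
have F_iterate j : YK (psi u) (YK (phi v) (smash_pair u' v') (n - 1 - j)) j = F j.
  have vv'_gh := Vg_modes (n - 1 - j) v_g v'_h.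
  by rewrite (phi_mode_smash_pair _ _ _ v_g) (psi_mode_smash_pair _ _ _ vv'_gh).
have [M U_trunc] : exists M, forall m, M <= m -> YU u (act g u') m = 0.
  by case: HU => _ U_trunc _ _ _; apply: U_trunc.
have pair_trunc m k : M <= m -> YK (psi u) (YK (phi v) (smash_pair u' v') k) m = 0.
  move=> le_Mm; rewrite (phi_mode_smash_pair _ _ _ v_g).
  rewrite (psi_mode_smash_pair _ _ _ (Vg_modes _ v_g v'_h)) U_trunc //.
  exact: bilinear0l smash_pair_bilinear _.
apply: (has_zsum_unique (F := F)).
  apply: (eq_has_zsum _ (has_zsum_linear_map f_lin (HYsh.2 _ _ _ _ _ n v_g))) => j.
  by rewrite f_tens.
exact: eq_has_zsum F_iterate (nva_iterate_minus1 HK pair_trunc n).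
Qed.

Lemma lift_modes_tens u v u' v' n :
  f (Ysh (tens u v) (tens u' v') n) = YK (f (tens u v)) (f (tens u' v')) n.
Proof.
have f0 := linear_map0 f_lin; have fD := linear_mapD f_lin.
case: HV => _ V_decomp _ _; move: v u' v'.
apply: (graded_ind V_decomp) => [|x y IHx IHy|g v v_g] u' v'.
- by rewrite (bilinear0r tens_bilin) (vo0l Ysh_lin) f0 (vo0l K_lin).
- by rewrite (bilinearDr tens_bilin) (voDl Ysh_lin) !fD (voDl K_lin) IHx IHy.
move: v'; apply: (graded_ind V_decomp) => [|x y IHx IHy|h v' v'_h].
- by rewrite (bilinear0r tens_bilin) (vo0r Ysh_lin) f0 (vo0r K_lin).
- by rewrite (bilinearDr tens_bilin) (voDr Ysh_lin) !fD (voDr K_lin) IHx IHy.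
exact: lift_modes_homogeneous v_g v'_h.
Qed.

Lemma lift_modes t t' n : f (Ysh t t' n) = YK (f t) (f t') n.
Proof.
apply: (tensor_bilinear_ext HT (B1 := fun t t' => f (Ysh t t' n))
                              (B2 := fun t t' => YK (f t) (f t') n)) => [t1|t1|t1|t1|].
- by move=> a x y; rewrite Ysh_lin.2 f_lin.
- by move=> a x y; rewrite Ysh_lin.1 f_lin.
- by move=> a x y; rewrite f_lin K_lin.2.
- by move=> a x y; rewrite f_lin K_lin.1.
move=> u v u' v'; exact: lift_modes_tens.
Qed.

End SmashProductUniversality.

Theorem proposition2p15
  (G : Type) (mulG : G -> G -> G) (e : G) (invG : G -> G)
  (HG : is_group mulG e invG)
  (U : lmodType Cx) (vacU : U) (YU : modes U) (HU : is_nva vacU YU)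
  (act : G -> U -> U) (Hact : is_aut_action mulG e vacU YU act)
  (V : lmodType Cx) (vacV : V) (YV : modes V) (Vg : G -> V -> Prop)
  (HV : is_graded_nva mulG e vacV YV Vg)
  (T : lmodType Cx) (tens : U -> V -> T) (HT : is_tensor_product tens)
  (Ysh : modes T) (HYsh : is_smash_vo YU YV act Vg tens Ysh)
  (K : lmodType Cx) (vacK : K) (YK : modes K) (HK : is_nva vacK YK)
  (psi : U -> K) (phi : V -> K)
  (Hpsi : is_nva_hom vacU YU vacK YK psi) (Hphi : is_nva_hom vacV YV vacK YK phi)
  (Hcomm : forall (g : G) (u : U) (v : V), Vg g v ->
     forall (w : K) (m n : int),
       YK (phi v) (YK (psi u) w n) m = YK (psi (act g u)) (YK (phi v) w m) n) :
  exists f : T -> K,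
    [/\ is_nva_hom (tens vacU vacV) Ysh vacK YK f,
        (forall u : U, f (tens u vacV) = psi u),
        (forall v : V, f (tens vacU v) = phi v) &
        (forall f' : T -> K,
           is_nva_hom (tens vacU vacV) Ysh vacK YK f' ->
           (forall u : U, f' (tens u vacV) = psi u) ->
           (forall v : V, f' (tens vacU v) = phi v) ->
           forall t : T, f' t = f t)].
Proof.
have [f [f_lin f_tens]] := (HT.2 K _ (smash_pair_bilinear HK Hpsi Hphi)).1.
have f_unitr u : f (tens u vacV) = psi u by rewrite f_tens (smash_pair_unitr HK psi Hphi).
have f_unitl v : f (tens vacU v) = phi v by rewrite f_tens (smash_pair_unitl HK _ Hpsi).
exists f; split=> //.
  split=> //; first by rewrite f_unitl; case: Hphi.
  apply: (lift_modes HG HU Hact HV HT HYsh HK Hpsi Hphi Hcomm f_lin) => u v.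
  by rewrite f_tens.
move=> f' [f'_lin _ f'_modes] f'_unitr f'_unitl.
apply: (tensor_linear_ext HT f'_lin f_lin) => u v.
by rewrite -{1}(smash_unit_mode HU Hact HV HT HYsh) f'_modes f'_unitr f'_unitl f_tens.
Qed.
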